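(* Let $\kappa$ be a regular uncountable cardinal with $\kappa^{<\kappa}=\kappa$ and $\gamma^\omega<\kappa$ for all $\gamma<\kappa$, and let $I$ be the linear order described in the context. Then $I$ is $(\kappa,bs,bs)$-nice.
   Context: $I^0$: order $\kappa\times\mathbb Q$ lexicographically; $I^0$ is the set of $f:\omega\to\kappa\times\mathbb Q$, $f(n)=(f_1(n),f_2(n))$, with $\{n\mid f_1(n)\ne0\}$ finite, ordered by comparing at the least $n$ where they differ. Construct $I^0\subseteq I^1\subseteq\dots$ ($i<\kappa$): given $I^i$, for each $\nu\in I^i$ add a new element $\nu^{i+1}$ with $\nu^{i+1}<\nu$ and, for all $\tau\in I^i\setminus\{\nu\}$, $\tau<\nu^{i+1}$ iff $\tau<\nu$ (for distinct $\nu,\mu$, $\nu^{i+1}<\mu^{i+1}$ iff $\nu<\mu$); $I^{i+1}=I^i\cup\{\nu^{i+1}\mid\nu\in I^i\}$; unions at limits; $I=\bigcup_{i<\kappa}I^i$. Types: $tp_{bs}(a,B,A)$ is the set of atomic and negated atomic formulas (in $\{<\}$) with parameters in $B$ true of $a$. A $\kappa$-representation of $A$ is an increasing continuous sequence $\langle A_\alpha\mid\alpha<\kappa\rangle$ of subsets of size $<\kappa$ with union $A$. $tp_{bs}(a,B,A)$ $(bs,bs)$-splits over $D$ if there are $b_1,b_2\in B$ with $tp_{bs}(b_1,D,A)=tp_{bs}(b_2,D,A)$ but $tp_{bs}(a^\frown b_1,D,A)\ne tp_{bs}(a^\frown b_2,D,A)$. $Sp_{bs}(\mathbb A)$ is the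 set of limit $\delta<\kappa$ such that some $a\in A$ has $tp_{bs}(a,A_\delta,A)$ $(bs,bs)$-splitting over $A_\beta$ for all $\beta<\delta$. $A$ is $(\kappa,bs,bs)$-nice if $Sp_{bs}(\mathbb A)$ is non-stationary for a (equivalently every) $\kappa$-representation $\mathbb A$ of $A$. *)

From mathcomp Require Import all_boot all_order all_algebra.
From Stdlib Require Import List.
Set Implicit Arguments. Unset Strict Implicit. Unset Printing Implicit Defensive.
Import Order.TTheory GRing.Theory Num.Theory.

(* The cardinal kappa, represented by a type K with a strict well-order
   [lt] whose order type is kappa (K = the set of ordinals < kappa).   *)
Section Kappa.
Variables (K : Type) (lt : K -> K -> Prop).

Definition le (a b : K) : Prop := lt a b \/ a = b.

Definition strict_well_order : Prop :=
  well_founded lt /\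
  (forall a b c, lt a b -> lt b c -> lt a c) /\
  (forall a, ~ lt a a) /\
  (forall a b, lt a b \/ a = b \/ lt b a).

Definition card_lt_kappa (U : Type) (X : U -> Prop) : Prop :=
  ~ exists f : K -> U, (forall k, X (f k)) /\ (forall a b, f a = f b -> a = b).

Definition is_cardinal : Prop := forall i : K, card_lt_kappa (fun j => lt j i).

Definition uncountable : Prop :=
  ~ exists f : K -> nat, forall a b, f a = f b -> a = b.

Definition regular : Prop :=
  forall S : K -> Prop, card_lt_kappa S -> exists b, forall x, S x -> lt x b.

Definition pow_lt_kappa_eq_kappa : Prop :=
  forall i : K, exists g : ({j : K | lt j i} -> K) -> K,
    forall f1 f2, g f1 = g f2 -> f1 = f2.

Definition pow_omega_lt_kappa : Prop :=
  forall i : K,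
    ~ exists f : K -> (nat -> K),
        (forall k n, lt (f k n) i) /\ (forall a b, f a = f b -> a = b).

Definition is_limit (d : K) : Prop :=
  (exists b, lt b d) /\ (forall b, lt b d -> exists c, lt b c /\ lt c d).

Definition club (C : K -> Prop) : Prop :=
  (forall a, exists b, C b /\ le a b) /\
  (forall d, is_limit d ->
     (forall a, lt a d -> exists b, C b /\ lt a b /\ lt b d) -> C d).

Definition stationary (S : K -> Prop) : Prop :=
  forall C, club C -> exists d, C d /\ S d.

(* Basic types (atomic / negated atomic formulas in {<} with equality) *)
Section Types.
Variables (U : Type) (R : U -> U -> Prop).

Inductive term := Var of nat | Par of U.
Inductive atom := ALt of term & term | AEq of term & term.
Inductive literal := Pos of atom | Neg of atom.

Definition teval (ab : list U) (t : term) : option U :=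
  match t with Var n => nth_error ab n | Par u => Some u end.

Definition aholds (ab : list U) (a : atom) : Prop :=
  match a with
  | ALt t1 t2 => match teval ab t1, teval ab t2 with
                 | Some u, Some v => R u v | _, _ => False end
  | AEq t1 t2 => match teval ab t1, teval ab t2 with
                 | Some u, Some v => u = v | _, _ => False end
  end.

Definition lholds (ab : list U) (l : literal) : Prop :=
  match l with Pos a => aholds ab a | Neg a => ~ aholds ab a end.

Definition term_ok (ab : list U) (B : U -> Prop) (t : term) : Prop :=
  match t with Var n => (n < size ab)%N | Par u => B u end.

Definition atom_ok ab B (a : atom) : Prop :=
  match a with ALt t1 t2 | AEq t1 t2 => term_ok ab B t1 /\ term_ok ab B t2 end.

Definition lit_ok ab B (l : literal) : Prop :=
  match l with Pos a | Neg a => atom_ok ab B a end.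

Definition tp_bs (ab : list U) (B : U -> Prop) : literal -> Prop :=
  fun l => lit_ok ab B l /\ lholds ab l.

Definition same_set (P Q : literal -> Prop) : Prop := forall l, P l <-> Q l.

Definition bs_splits (a : U) (B D : U -> Prop) : Prop :=
  exists b1 b2, B b1 /\ B b2 /\
    same_set (tp_bs [:: b1] D) (tp_bs [:: b2] D) /\
    ~ same_set (tp_bs [:: a; b1] D) (tp_bs [:: a; b2] D).

Definition kappa_rep (A : U -> Prop) (As : K -> U -> Prop) : Prop :=
  (forall a u, As a u -> A u) /\
  (forall a, card_lt_kappa (As a)) /\
  (forall a b, le a b -> forall u, As a u -> As b u) /\
  (forall d, is_limit d -> forall u, As d u <-> exists a, lt a d /\ As a u) /\
  (forall u, A u <-> exists a, As a u).

Definition Sp_bs (A : U -> Prop) (As : K -> U -> Prop) : K -> Prop :=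
  fun d => is_limit d /\
    exists a, A a /\ forall b, lt b d -> bs_splits a (As d) (As b).

Definition nice (A : U -> Prop) : Prop :=
  forall As, kappa_rep A As -> ~ stationary (Sp_bs A As).

End Types.

Definition isZero (k : K) : Prop := forall j, ~ lt j k.

Definition I0_mem (f : nat -> K * rat) : Prop :=
  exists N, forall n, (N <= n)%N -> isZero (f n).1.

Definition lexKQ (p q : K * rat) : Prop :=
  lt p.1 q.1 \/ (p.1 = q.1 /\ (p.2 < q.2)%R).

Definition I0_lt (f g : nat -> K * rat) : Prop :=
  exists n, (forall m, (m < n)%N -> f m = g m) /\ lexKQ (f n) (g n).

(* An element of I is (x, [i_k; ...; i_1]) with x in I^0 and
   i_1 < ... < i_k, standing for (...(x^{i_1+1})...)^{i_k+1}. *)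
Definition Ielt := ((nat -> K * rat) * list K)%type.

Fixpoint all_below (i : K) (s : list K) : Prop :=
  match s with nil => True | j :: s' => lt j i /\ all_below i s' end.

Fixpoint decr (s : list K) : Prop :=
  match s with nil => True | i :: s' => all_below i s' /\ decr s' end.

Definition I_mem (e : Ielt) : Prop := I0_mem e.1 /\ decr e.2.

(* the order, following the construction of I^{i+1} from I^i;
   below i t  <->  (y,t) belongs to I^i *)
Inductive I_lt : Ielt -> Ielt -> Prop :=
| Ilt_base x y : I0_lt x y -> I_lt (x, nil) (y, nil)
| Ilt_copy_orig x i s : I_lt (x, i :: s) (x, s)
| Ilt_copy_other x i s y t :
    all_below i t -> (y, t) <> (x, s) -> I_lt (x, s) (y, t) ->
    I_lt (x, i :: s) (y, t)
| Ilt_other_copy x i s y t :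
    all_below i t -> (y, t) <> (x, s) -> I_lt (y, t) (x, s) ->
    I_lt (y, t) (x, i :: s)
| Ilt_copies x s y t i :
    I_lt (x, s) (y, t) -> I_lt (x, i :: s) (y, i :: t).

End Kappa.

From mathcomp Require Import all_boot all_order all_algebra zify.
From Stdlib Require Import ClassicalEpsilon FunctionalExtensionality Lia.
Set Implicit Arguments. Unset Strict Implicit. Unset Printing Implicit Defensive.
Import Order.TTheory GRing.Theory Num.Theory.

(* Let I_g be the set of elements of I all of whose ordinal coordinates are
   below g.  Since gamma^omega < kappa, each I_g is small, and by regularity
   every small subset of I lies in some I_g; hence a kappa-representation
   (A_a) of I and (I_g) are interleaved by some F : kappa -> kappa, and at
   every closure point d of F we have A_d = I_d.  For such d and any a in I
   the relations of a to I_d are determined by those of a single piece I_g,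
   g < d, so tp(a, A_d) does not split over A_(F g):
   - if a lies in I_d, it lies in some I_g;
   - if a = (x, s) and some coordinate of x is >= d, then by density of Q,
     a < b holds for b in I_d iff a < c < b for some c in I_g;
   - otherwise only some copy indices of a are >= d; dropping them gives an
     element c of I_d, and a sits immediately below c as seen from I_d. *)

Lemma nat_least (P : nat -> Prop) :
  (exists n, P n) -> exists n, P n /\ forall m, (m < n)%N -> ~ P m.
Proof.
case=> n; elim/ltn_ind: n => n IH Pn.
case: (classic (exists m, (m < n)%N /\ P m)) => [[m [mn Pm]]|nex].
  exact: IH mn Pm.
by exists n; split=> // m mn Pm; apply: nex; exists m.
Qed.

Section BasicTypes.
Variables (U : Type) (R : U -> U -> Prop).

Definition agree_over (D : U -> Prop) (b1 b2 : U) : Prop :=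
  forall c, D c -> (R c b1 <-> R c b2) /\ (R b1 c <-> R b2 c) /\ (c = b1 <-> c = b2).

Definition determined_over (a : U) (B D : U -> Prop) : Prop :=
  forall b1 b2, B b1 -> B b2 -> agree_over D b1 b2 -> agree_over (eq a) b1 b2.

Lemma same_tp_bs1_agree D b1 b2 :
  same_set (tp_bs R [:: b1] D) (tp_bs R [:: b2] D) ->
  (R b1 b1 <-> R b2 b2) /\ agree_over D b1 b2.
Proof.
have size1 : (0 < size [:: b1])%N by [].
move=> same; split=> [|c Dc].
  by have := same (Pos (ALt (Var U 0) (Var U 0))); rewrite /tp_bs /=; tauto.
split; [|split].
- by have := same (Pos (ALt (Par c) (Var U 0))); rewrite /tp_bs /=; tauto.
- by have := same (Pos (ALt (Var U 0) (Par c))); rewrite /tp_bs /=; tauto.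
- by have := same (Pos (AEq (Par c) (Var U 0))); rewrite /tp_bs /=; tauto.
Qed.

Lemma same_tp_bs2 D a b1 b2 :
  (R b1 b1 <-> R b2 b2) -> agree_over D b1 b2 -> agree_over (eq a) b1 b2 ->
  same_set (tp_bs R [:: a; b1] D) (tp_bs R [:: a; b2] D).
Proof.
move=> Rbb agD /(_ a erefl) [Rab [Rba eab]].
have agD' c : D c -> (R c b1 <-> R c b2) /\ (R b1 c <-> R b2 c) /\
    (c = b1 <-> c = b2) /\ (b1 = c <-> b2 = c).
  by move=> /agD [? [? e]]; do 3!split=> //; split=> /esym/e.
have eba : b1 = a <-> b2 = a by split=> /esym/eab.
have size2_0 : (0 < 2)%N by [].
have size2_1 : (1 < 2)%N by [].
have nth_nil n : List.nth_error ([::] : list U) n = None by case: n.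
case=> [] [] t1 t2; rewrite /tp_bs /=.
all: case: t1 => [[|[|n]]|c]; case: t2 => [[|[|n']]|c'] /=; rewrite ?nth_nil; try tauto.
all: try by split=> -[[h1 h2] h]; (have := agD' _ h1) || (have := agD' _ h2); tauto.
all: by split=> -[h1 h]; have := agD' _ h1; tauto.
Qed.

Lemma determined_not_bs_splits a B D :
  determined_over a B D -> ~ bs_splits R a B D.
Proof.
move=> det [b1 [b2 [Bb1 [Bb2 [same1 nsame2]]]]]; apply: nsame2.
have [Rbb agD] := same_tp_bs1_agree same1.
exact: same_tp_bs2 Rbb agD (det _ _ Bb1 Bb2 agD).
Qed.

Lemma determined_over_mem a B D : D a -> determined_over a B D.
Proof. by move=> Da b1 b2 _ _ agD _ <-; apply: agD. Qed.

Lemma determined_over_nmem a B D : ~ B a ->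
  (forall b1 b2, B b1 -> B b2 -> agree_over D b1 b2 ->
     (R a b1 <-> R a b2) /\ (R b1 a <-> R b2 a)) ->
  determined_over a B D.
Proof.
move=> nBa det b1 b2 Bb1 Bb2 agD _ <-; have [Rab Rba] := det _ _ Bb1 Bb2 agD.
by do 2!split=> //; split=> eab; [case: nBa; rewrite eab | case: nBa; rewrite eab].
Qed.

Lemma determined_over_sub a B B' D D' :
  (forall b, B' b -> B b) -> (forall c, D c -> D' c) ->
  determined_over a B D -> determined_over a B' D'.
Proof.
by move=> BB' DD' det b1 b2 /BB' Bb1 /BB' Bb2 agD'; apply: det => // c /DD' /agD'.
Qed.

End BasicTypes.

Section Kappa.
Variables (K : Type) (lt : K -> K -> Prop).
Hypothesis Hwo : strict_well_order lt.

Lemma ltK_trans a b c : lt a b -> lt b c -> lt a c.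
Proof. by case: Hwo => _ [trans _]; apply: trans. Qed.

Lemma ltK_irr a : ~ lt a a.
Proof. by case: Hwo => _ [_ []]. Qed.

Lemma ltK_total a b : lt a b \/ a = b \/ lt b a.
Proof. by case: Hwo => _ [_ [_]]. Qed.

Lemma ltK_asym a b : lt a b -> ~ lt b a.
Proof. by move=> ab /(ltK_trans ab); apply: ltK_irr. Qed.

Lemma leK_ltK_trans a b c : le lt a b -> lt b c -> lt a c.
Proof. by case=> [ab /(ltK_trans ab) | ->]. Qed.

Lemma ltK_leK_trans a b c : lt a b -> le lt b c -> lt a c.
Proof. by move=> ab [/(ltK_trans ab) | <-]. Qed.

Lemma nltK_le a b : ~ lt a b -> le lt b a.
Proof. by move=> nab; case: (ltK_total a b) => [//|[->|ba]]; [right|left]. Qed.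

Lemma ltK_min (P : K -> Prop) :
  (exists x, P x) -> exists x, P x /\ forall y, P y -> ~ lt y x.
Proof.
case=> x; elim/(well_founded_ind (proj1 Hwo)): x => x IH Px.
case: (classic (exists y, P y /\ lt y x)) => [[y [Py yx]]|nex].
  exact: IH yx Py.
by exists x; split=> // y Py yx; apply: nex; exists y.
Qed.

Lemma exists_isZero : inhabited K -> exists z, isZero lt z.
Proof.
case=> k; have [z [_ zmin]] := @ltK_min (fun _ => True) (ex_intro _ k I).
by exists z => j; apply: zmin.
Qed.

Lemma isZero_le z k : isZero lt z -> le lt z k.
Proof. by move=> z0; apply: nltK_le; apply: z0. Qed.

Lemma isZero_uniq z z' : isZero lt z -> isZero lt z' -> z = z'.
Proof. by move=> z0 z0'; case: (isZero_le z' z0) => // /z0'. Qed.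

Lemma all_below_le i j s : le lt i j -> all_below lt i s -> all_below lt j s.
Proof.
move=> ij; elim: s => //= k s IH [ki /IH]; split=> //; exact: ltK_leK_trans ki ij.
Qed.

Lemma all_below_cons i j s : lt i j -> all_below lt i s -> all_below lt j (i :: s).
Proof. by move=> ij iS; split=> //; apply: all_below_le iS; left. Qed.

Lemma all_below_cons_irr j s : ~ all_below lt j (j :: s).
Proof. by case=> /ltK_irr. Qed.

Lemma all_below_cons_asym i j s t :
  all_below lt j (i :: s) -> ~ all_below lt i (j :: t).
Proof. by case=> ij _ [/(ltK_asym ij)]. Qed.

Lemma limit_max2 d a b : is_limit lt d -> lt a d -> lt b d ->
  exists g, lt g d /\ lt a g /\ lt b g.
Proof.
move=> [_ dlim] ad bd.
have [m [md [am bm]]] : exists m, lt m d /\ le lt a m /\ le lt b m.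
  case: (ltK_total a b) => [ab|[<-|ba]].
  - by exists b; split=> //; split; [left|right].
  - by exists a; split=> //; split; right.
  - by exists a; split=> //; split; [right|left].
have [g [mg gd]] := dlim m md.
by exists g; split=> //; split; apply: leK_ltK_trans mg.
Qed.

Lemma limit_bound_fin d (f : nat -> K) n : is_limit lt d ->
  (forall k, (k < n)%N -> lt (f k) d) ->
  exists g, lt g d /\ forall k, (k < n)%N -> lt (f k) g.
Proof.
move=> dlim; elim: n => [|n IH] fd.
  by have [[g gd] _] := dlim; exists g.
have [g1 [g1d fg1]] := IH (fun k kn => fd k (ltnW kn)).
have [g [gd [g1g fng]]] := limit_max2 dlim g1d (fd n (ltnSn n)).
exists g; split=> // k; rewrite ltnS leq_eqVlt => /predU1P [-> //|kn].
exact: ltK_trans (fg1 k kn) g1g.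
Qed.

Lemma limit_all_below d s : is_limit lt d -> all_below lt d s ->
  exists g, lt g d /\ all_below lt g s.
Proof.
move=> dlim; elim: s => [|v s IH] /=.
  by have [[g gd] _] := dlim; exists g.
move=> [vd /IH [g1 [g1d sg1]]].
have [g [gd [g1g vg]]] := limit_max2 dlim g1d vd.
by exists g; split=> //; split=> //; apply: all_below_le sg1; left.
Qed.

Lemma lexKQ_irr p : ~ lexKQ lt p p.
Proof. by case=> [/ltK_irr | [_]]; rewrite ?ltxx. Qed.

Lemma lexKQ_trans p q r : lexKQ lt p q -> lexKQ lt q r -> lexKQ lt p r.
Proof.
case=> [pq|[e1 pq]] [qr|[e2 qr]].
- by left; apply: ltK_trans pq qr.
- by left; rewrite -e2.
- by left; rewrite e1.
- by right; split; [rewrite e1 | apply: lt_trans pq qr].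
Qed.

Lemma lexKQ_total p q : p <> q -> lexKQ lt p q \/ lexKQ lt q p.
Proof.
case: p q => a r [b s] /= pq.
case: (ltK_total a b) => [ab|[eab|ba]]; [by left; left | subst b | by right; left].
have rs : r != s by apply/eqP => rs; apply: pq; rewrite rs.
by case/orP: (lt_total rs) => ?; [left|right]; right.
Qed.

Lemma lexKQ_between p q : lexKQ lt p q ->
  exists r, lexKQ lt p (p.1, r) /\ lexKQ lt (p.1, r) q.
Proof.
case=> [pq|[pq r_lt]].
  by exists (p.2 + 1)%R; split; [right; split=> //=; rewrite ltrDl | left].
have [pm mq] := midf_lt r_lt.
by exists ((p.2 + q.2) / 2)%R; split; right; split.
Qed.

Lemma I0_lt_irr x : ~ I0_lt lt x x.
Proof. by case=> n [_ /lexKQ_irr]. Qed.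

Lemma I0_lt_trans x y z : I0_lt lt x y -> I0_lt lt y z -> I0_lt lt x z.
Proof.
move=> [n1 [e1 h1]] [n2 [e2 h2]].
case: (ltngtP n1 n2) => n12.
- exists n1; split; last by rewrite -(e2 _ n12).
  by move=> m mn; rewrite e1 // e2 // (ltn_trans mn n12).
- exists n2; split; last by rewrite (e1 _ n12).
  by move=> m mn; rewrite e1 ?(ltn_trans mn n12) // e2.
- subst n2; exists n1; split; last exact: lexKQ_trans h1 h2.
  by move=> m mn; rewrite e1 // e2.
Qed.

Lemma I0_lt_asym x y : I0_lt lt x y -> ~ I0_lt lt y x.
Proof. by move=> xy /(I0_lt_trans xy); apply: I0_lt_irr. Qed.

Lemma I0_lt_total x y : x <> y -> I0_lt lt x y \/ I0_lt lt y x.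
Proof.
move=> xy.
have [n [xyn nmin]] : exists n, x n <> y n /\ forall m, (m < n)%N -> ~ x m <> y m.
  apply: nat_least; apply: NNPP => same; apply: xy; apply: functional_extensionality => n.
  by apply: NNPP => xyn; apply: same; exists n.
have eqm m : (m < n)%N -> x m = y m by move=> /nmin; apply: NNPP.
by case: (lexKQ_total xyn) => ?; [left|right]; exists n; split=> // m mn; rewrite eqm.
Qed.

Lemma I_lt_copy_l x j t b : all_below lt j b.2 -> b <> (x, t) ->
  I_lt lt (x, j :: t) b <-> I_lt lt (x, t) b.
Proof.
case: b => y u /= ju neq; split=> [H|]; last exact: Ilt_copy_other.
inversion H; subst.
- by case: neq.
- by [].
- by case: (all_below_cons_asym (t := t) ju).
- by case: (all_below_cons_irr ju).
Qed.

Lemma I_lt_copy_r x j t b : all_below lt j b.2 -> b <> (x, t) ->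
  I_lt lt b (x, j :: t) <-> I_lt lt b (x, t).
Proof.
case: b => y u /= ju neq; split=> [H|]; last exact: Ilt_other_copy.
inversion H; subst => //.
- by case: ju => _ [/ltK_irr].
- by case: (all_below_cons_asym (t := t) ju).
- by case: (all_below_cons_irr ju).
Qed.

Lemma I_lt_copies x y i s t : x <> y ->
  I_lt lt (x, i :: s) (y, i :: t) <-> I_lt lt (x, s) (y, t).
Proof.
move=> xy; split=> [H|]; last exact: Ilt_copies.
inversion H; subst => //.
- by case: (all_below_cons_irr (j := i) (s := t)).
- by case: (all_below_cons_irr (j := i) (s := s)).
Qed.

Lemma I_lt_diff x y s t : x <> y -> decr lt s -> decr lt t ->
  I_lt lt (x, s) (y, t) <-> I0_lt lt x y.
Proof.
move=> xy; have [n] := ubnP (size s + size t); elim: n s t => // n IH.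
have xy' (s t : seq K) : (x, s) <> (y, t) by case=> /xy.
have yx' (s t : seq K) : (y, t) <> (x, s) by case=> /esym /xy.
case=> [|i s] [|j t] /= st ds dt.
- by split=> [H|/Ilt_base //]; inversion H.
- by rewrite I_lt_copy_r //; apply: (IH [::] t _ ds dt.2) => /=; lia.
- by rewrite I_lt_copy_l //; apply: (IH s [::] _ ds.2 dt) => /=; lia.
case: (ltK_total i j) => [ij|[<-|ji]].
- rewrite I_lt_copy_r //=; last exact: all_below_cons ij ds.1.
  by apply: (IH (i :: s) t _ ds dt.2) => /=; lia.
- by rewrite I_lt_copies //; apply: (IH _ _ _ ds.2 dt.2) => /=; lia.
- rewrite I_lt_copy_l //=; last exact: all_below_cons ji dt.1.
  by apply: (IH s (j :: t) _ ds.2 dt) => /=; lia.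
Qed.

Lemma I_lt_copy_orig_asym x j s : all_below lt j s -> ~ I_lt lt (x, s) (x, j :: s).
Proof.
move=> js H; inversion H; subst; try congruence.
- (* [Ilt_copy_orig] would need [s = i :: j :: s] *)
  by match goal with E : _ = _ |- _ => move/(congr1 size): E => /=; lia end.
- by case: (all_below_cons_asym (t := i :: s0) js).
- by case: (all_below_cons_irr js).
Qed.

Lemma I_lt_strip x s d : decr lt s -> ~ all_below lt d s ->
  exists s', decr lt s' /\ all_below lt d s' /\
    forall b, all_below lt d b.2 ->
      (I_lt lt (x, s) b <-> (x, s') = b \/ I_lt lt (x, s') b) /\
      (I_lt lt b (x, s) <-> (x, s') <> b /\ I_lt lt b (x, s')).
Proof.
elim: s => [_ []//|j r IH /= [jr dr] nds].
have jd : ~ lt j d by move=> jd; apply: nds; apply: all_below_cons jd jr.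
have below_j b : all_below lt d b.2 -> all_below lt j b.2.
  by apply: all_below_le; apply: nltK_le.
case: (classic (all_below lt d r)) => [rd|nrd].
  exists r; do 2!split=> //; move=> b /below_j jb.
  case: (classic (b = (x, r))) => [->|nb].
    split; first by split=> _; [left | apply: Ilt_copy_orig].
    by split=> [/(I_lt_copy_orig_asym jr) | [/(_ erefl)]].
  have nb' : (x, r) <> b by move=> eb; apply: nb; rewrite eb.
  rewrite I_lt_copy_l // I_lt_copy_r //.
  by split; split=> [|[]] //; right.
have [s' [ds' [s'd rel]]] := IH dr nrd.
exists s'; do 2!split=> //; move=> b bd.
have nb : b <> (x, r) by move=> eb; apply: nrd; rewrite eb in bd.
by rewrite I_lt_copy_l ?I_lt_copy_r //; [apply: rel | apply: below_j | apply: below_j].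
Qed.

Section Cardinal.
Hypotheses (Hcard : is_cardinal lt) (Hunc : uncountable K) (Hreg : regular lt).
Hypothesis Hom : pow_omega_lt_kappa lt.

Lemma small_subset (U : Type) (X Y : U -> Prop) :
  (forall u, X u -> Y u) -> card_lt_kappa K Y -> card_lt_kappa K X.
Proof.
by move=> XY Ysmall [f [fX finj]]; apply: Ysmall; exists f; split=> // k; apply: XY.
Qed.

Lemma small_boundedP (S : K -> Prop) :
  card_lt_kappa K S <-> exists b, forall k, S k -> lt k b.
Proof.
split; first exact: Hreg.
by case=> b Sb; exact: small_subset Sb (Hcard (i := b)).
Qed.

Lemma K_inhabited : inhabited K.
Proof.
apply: NNPP => noK; apply: Hunc; exists (fun _ => 0%N) => a.
by case: noK; exact: inhabits a.
Qed.

Lemma small_countable (T : nat -> K) : card_lt_kappa K (fun k => exists n, k = T n).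
Proof.
case=> f [fT finj]; apply: Hunc; have [g gP] := choice _ fT.
by exists g => a b gab; apply: finj; rewrite (gP a) (gP b) gab.
Qed.

Lemma bounded_countable (T : nat -> K) : exists b, forall n, lt (T n) b.
Proof.
by have [b Tb] := Hreg (small_countable (T := T)); exists b => n; apply: Tb; exists n.
Qed.

Lemma exists_ltK2 a b : exists c, lt a c /\ lt b c.
Proof.
have [c Tc] := bounded_countable (fun n => if n is 0 then a else b).
by exists c; split; [apply: (Tc 0%N) | apply: (Tc 1%N)].
Qed.

Lemma small_image (U : Type) (X : U -> Prop) (f : U -> K) :
  card_lt_kappa K X -> card_lt_kappa K (fun k => exists u, X u /\ k = f u).
Proof.
move=> Xsmall [g [gX ginj]]; apply: Xsmall; have [h hP] := choice _ gX.
exists h; split=> [k | a b hab]; first by case: (hP k).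
by apply: ginj; rewrite (proj2 (hP a)) (proj2 (hP b)) hab.
Qed.

Lemma small_image_seq (U : Type) (X : U -> Prop) (f : U -> nat -> K) :
  card_lt_kappa K X -> card_lt_kappa K (fun k => exists u n, X u /\ k = f u n).
Proof.
move=> Xsmall; apply/small_boundedP.
have bnd n : exists b, forall k, (exists u, X u /\ k = f u n) -> lt k b.
  exact: Hreg (small_image (f := fun u => f u n) Xsmall).
have [b bP] := choice _ bnd; have [c bc] := bounded_countable b.
exists c => _ [u [n [Xu ->]]]; apply: ltK_trans (bc n).
by apply: bP; exists u.
Qed.

Lemma small_of_code (U : Type) (X : U -> Prop) (code : U -> nat -> K) i :
  (forall u n, X u -> lt (code u n) i) -> injective code -> card_lt_kappa K X.
Proof.
move=> codei codeinj [f [fX finj]]; apply: (Hom (i := i)).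
by exists (fun k => code (f k)); split=> [k n | a b /codeinj /finj //]; apply: codei.
Qed.

Lemma kappa_rep_cover (U : Type) (A : U -> Prop) (As : K -> U -> Prop) (X : U -> Prop) :
  kappa_rep lt A As -> (forall u, X u -> A u) -> card_lt_kappa K X ->
  exists b, forall u, X u -> As b u.
Proof.
move=> [_ [_ [mono [_ cover]]]] XA Xsmall.
pose pick u := epsilon K_inhabited (fun b => As b u).
have pickP u : X u -> As (pick u) u by move=> /XA /cover; apply: epsilon_spec.
have [b bP] := Hreg (small_image (f := pick) Xsmall).
exists b => u Xu; apply: (mono _ b _ u (pickP u Xu)).
by left; apply: bP; exists u.
Qed.

Lemma bounded_image_below (F : K -> K) a :
  exists b, lt a b /\ forall g, lt g a -> lt (F g) b.
Proof.
have [b Fb] := Hreg (small_image (f := F) (Hcard (i := a))).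
have [c [ac bc]] := exists_ltK2 a b.
by exists c; split=> // g ga; apply: ltK_trans bc; apply: Fb; exists g.
Qed.

Definition closure_point (F : K -> K) (d : K) : Prop :=
  is_limit lt d /\ forall a, lt a d -> lt (F a) d.

Lemma closure_point_club (F : K -> K) : club lt (closure_point F).
Proof.
split=> [a|d dlim dC]; last first.
  by split=> // g /dC [b [[_ Fb] [gb bd]]]; exact: ltK_trans (Fb _ gb) bd.
have [G GP] := choice _ (bounded_image_below F).
pose s n := iter n G a.
have [d [sd dmin]] := ltK_min (bounded_countable s).
have s_up c : lt c d -> exists n, lt c (s n).
  move=> cd; apply: NNPP => nsc; apply: (dmin c) cd => n.
  apply: ltK_leK_trans (proj1 (GP (s n))) _.
  by apply: nltK_le => sc; apply: nsc; exists n.+1.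
exists d; split; last by left; apply: (sd 0%N).
split; first split.
- by exists a; apply: (sd 0%N).
- by move=> b /s_up [n bn]; exists (s n).
- by move=> g /s_up [n gn]; apply: ltK_trans (sd n.+1); apply: (proj2 (GP (s n))).
Qed.

Section Pieces.
Variable z0 : K.
Hypothesis z0P : isZero lt z0.

Lemma I0_lt_between x y m :
  (forall k, (k < m)%N -> x k = y k) -> lexKQ lt (x m) (y m) ->
  exists z, I0_mem lt z /\ I0_lt lt x z /\ I0_lt lt z y /\
    forall k, (z k).1 = if (k <= m)%N then (x k).1 else z0.
Proof.
move=> xy xym; have [r [xr ry]] := lexKQ_between xym.
pose z k := if (k < m)%N then x k else if k == m then ((x m).1, r) else (z0, 0%R).
have zm : z m = ((x m).1, r) by rewrite /z ltnn eqxx.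
exists z; split; [|split; [|split]].
- by exists m.+1 => k mk; rewrite /z ltnNge (ltnW mk) /= gtn_eqF.
- by exists m; rewrite zm; split=> // k km; rewrite /z km.
- by exists m; rewrite zm; split=> // k km; rewrite /z km xy.
- by move=> k; rewrite /z; case: ltngtP => // ->.
Qed.

Lemma all_belowP g s :
  all_below lt g s <-> forall k, (k < size s)%N -> lt (nth z0 s k) g.
Proof.
elim: s => [|v s IH] /=; first by split=> // _ [].
split=> [[vg /IH sg] [|k] //= ks | sg]; first exact: sg.
by split; [apply: (sg 0%N) | apply/IH => k ks; apply: (sg k.+1)].
Qed.

Definition Ibelow (g : K) (e : Ielt K) : Prop :=
  I_mem lt e /\ (forall n, lt (e.1 n).1 g) /\ all_below lt g e.2.

Lemma Ibelow_mono g g' e : lt g g' -> Ibelow g e -> Ibelow g' e.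
Proof.
move=> gg' [Ie [xg sg]]; split=> //; split; last by apply: all_below_le sg; left.
by move=> n; apply: ltK_trans gg'.
Qed.

Lemma Ibelow_limit d e : is_limit lt d -> Ibelow d e -> exists g, lt g d /\ Ibelow g e.
Proof.
move=> dlim [[[N xN] ds] [xd sd]].
have [g1 [g1d xg1]] :=
  limit_bound_fin (f := fun n => (e.1 n).1) (n := N.+1) dlim (fun n _ => xd n).
have [g2 [g2d sg2]] := limit_all_below dlim sd.
have [g [gd [g1g g2g]]] := limit_max2 dlim g1d g2d.
exists g; split=> //; split; first by split=> //; exists N.
split; last by apply: all_below_le sg2; left.
move=> n; apply: ltK_trans g1g; case: (leqP n N) => [nN|Nn]; first exact: xg1.
by rewrite (isZero_uniq (xN n (ltnW Nn)) (xN N (leqnn N))); apply: xg1.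
Qed.

Lemma I0_lt_interpolate_below d g x y n :
  ~ lt (x n).1 d -> (forall k, (k < n)%N -> lt (x k).1 g) -> lt z0 g ->
  (forall k, lt (y k).1 d) -> I0_lt lt x y ->
  exists z, Ibelow g (z, [::]) /\ I0_lt lt x z /\ I0_lt lt z y.
Proof.
move=> xn xg z0g yd [m [xym lexm]].
have mn : (m < n)%N.
  rewrite ltnNge; apply/negP; rewrite leq_eqVlt => /predU1P [nm|nm]; apply: xn.
    by subst m; case: lexm => [xy | [-> _]]; [apply: ltK_trans xy _ | ]; apply: yd.
  by rewrite xym //; apply: yd.
have [z [z0m [xz [zy zx]]]] := I0_lt_between xym lexm.
exists z; split=> //; split; first by split.
split=> // k; rewrite zx; case: ifP => // km; apply: xg; exact: leq_ltn_trans km mn.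
Qed.

Lemma determined_copy d x s : is_limit lt d -> I0_mem lt x -> decr lt s ->
  (forall n, lt (x n).1 d) -> ~ all_below lt d s ->
  exists g, lt g d /\ determined_over (I_lt lt) (x, s) (Ibelow d) (Ibelow g).
Proof.
move=> dlim x0 ds xd nsd.
have [s' [ds' [s'd rel]]] := I_lt_strip x ds nsd.
have [g [gd cg]] : exists g, lt g d /\ Ibelow g (x, s').
  by apply: (Ibelow_limit (e := (x, s')) dlim); do !split.
exists g; split=> //.
apply: determined_over_nmem => [[_ [_ /nsd]] // | b1 b2 [_ [_ b1d]] [_ [_ b2d]]].
move=> /(_ _ cg) [ltc [gtc eqc]].
have [lt1 gt1] := rel _ b1d; have [lt2 gt2] := rel _ b2d.
by rewrite lt1 lt2 gt1 gt2 ltc gtc eqc.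
Qed.

Lemma determined_far d x s : is_limit lt d -> decr lt s -> (exists n, ~ lt (x n).1 d) ->
  exists g, lt g d /\ determined_over (I_lt lt) (x, s) (Ibelow d) (Ibelow g).
Proof.
move=> dlim ds /nat_least [n [xn nmin]].
have z0d : lt z0 d.
  by have [[g0 g0d] _] := dlim; apply: leK_ltK_trans (isZero_le _ z0P) g0d.
have [g1 [g1d xg1]] :=
  limit_bound_fin (f := fun k => (x k).1) dlim (fun k kn => NNPP _ (nmin k kn)).
have [g [gd [g1g z0g]]] := limit_max2 dlim g1d z0d.
have xg k : (k < n)%N -> lt (x k).1 g by move=> kn; apply: ltK_trans (xg1 k kn) g1g.
have x_ne y : (forall k, lt (y k).1 d) -> x <> y by move=> yd exy; apply: xn; rewrite exy.
have x_lt b : Ibelow d b ->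
    I_lt lt (x, s) b <-> exists c, Ibelow g c /\ I_lt lt (x, s) c /\ I_lt lt c b.
  case: b => y u [[_ du] [yd _]]; rewrite I_lt_diff //; last exact: x_ne.
  split=> [/(I0_lt_interpolate_below xn xg z0g yd) [z [zg [xz zy]]] | ].
    have zd k : lt (z k).1 d by apply: ltK_trans gd; apply: zg.2.1.
    exists (z, [::]); split=> //; split; first by rewrite I_lt_diff //; apply: x_ne zd.
    by rewrite I_lt_diff // => ezy; move: zy; rewrite ezy; apply: I0_lt_irr.
  case=> -[z t] [[[_ dt] [zg _]] [xz zy]].
  have zd k : lt (z k).1 d by apply: ltK_trans gd.
  move: xz; rewrite I_lt_diff //; last exact: x_ne.
  case: (classic (z = y)) => [<- // | nzy] xz; apply: I0_lt_trans xz _.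
  by rewrite -(I_lt_diff nzy dt du).
have lt_x b : Ibelow d b -> I_lt lt b (x, s) <-> ~ I_lt lt (x, s) b.
  case: b => y u [[_ du] [yd _]]; have nx := x_ne _ yd.
  rewrite !I_lt_diff //; last by move/esym.
  by split=> [/I0_lt_asym // | nxy]; case: (I0_lt_total nx).
exists g; split=> //.
apply: determined_over_nmem => [[_ [/(_ n)]] // | b1 b2 b1d b2d agree].
have same_lt : I_lt lt (x, s) b1 <-> I_lt lt (x, s) b2.
  rewrite (x_lt _ b1d) (x_lt _ b2d).
  by split=> -[c [cg [xc cb]]]; exists c; do 2!split=> //; apply/(proj1 (agree c cg)).
by rewrite (lt_x _ b1d) (lt_x _ b2d) same_lt.
Qed.

Lemma Ibelow_determined d a : is_limit lt d -> I_mem lt a ->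
  exists g, lt g d /\ determined_over (I_lt lt) a (Ibelow d) (Ibelow g).
Proof.
move=> dlim Ia.
case: (classic (Ibelow d a)) => [/(Ibelow_limit dlim) [g [gd ag]] | nda].
  by exists g; split=> //; apply: determined_over_mem.
case: a Ia nda => x s [x0 ds] nda.
case: (classic (exists n, ~ lt (x n).1 d)) => [far | near].
  exact: determined_far.
have xd n : lt (x n).1 d by apply: NNPP => xn; apply: near; exists n.
by apply: determined_copy => // sd; apply: nda.
Qed.

Definition bit (z1 : K) (b : bool) : K := if b then z1 else z0.

Lemma bit_inj z1 : z1 <> z0 -> injective (bit z1).
Proof. by move=> z10 [] [] //; rewrite /bit => e; case: z10; rewrite e. Qed.

(* Codes [e] by an omega-sequence in K: the ordinal coordinates of [e]
   verbatim, its rationals and the length of its list as bits [z0]/[z1]. *)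
Definition Icode (z1 : K) (e : Ielt K) (p : nat) : K :=
  match unpickle p : option (nat * (nat * nat)) with
  | Some (0, (n, _)) => (e.1 n).1
  | Some (1, (n, q)) => bit z1 (q == pickle (e.1 n).2)
  | Some (2, (k, _)) => nth z0 e.2 k
  | Some (3, (k, _)) => bit z1 (k < size e.2)
  | _ => z0
  end.

Lemma IcodeE z1 e t n q : Icode z1 e (pickle (t, (n, q))) =
  match t with
  | 0 => (e.1 n).1
  | 1 => bit z1 (q == pickle (e.1 n).2)
  | 2 => nth z0 e.2 n
  | 3 => bit z1 (n < size e.2)
  | _ => z0
  end.
Proof. by rewrite /Icode pickleK; case: t => [|[|[|[|t]]]]. Qed.

Lemma Icode_inj z1 : z1 <> z0 -> injective (Icode z1).
Proof.
move=> z10 [x s] [x' s'] same.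
have code (t n q : nat) := congr1 (fun c => c (pickle (t, (n, q)))) same.
have x1 n : (x n).1 = (x' n).1 by have := code 0%N n 0%N; rewrite !IcodeE.
have x2 n : (x n).2 = (x' n).2.
  have := code 1%N n (pickle (x n).2); rewrite !IcodeE /= => /(bit_inj z10).
  by rewrite eqxx => /esym/eqP/(pcan_inj pickleK).
have size_lt k : (k < size s)%N = (k < size s')%N.
  by have := code 3%N k 0%N; rewrite !IcodeE /= => /(bit_inj z10).
have sizes : size s = size s'.
  case: (ltngtP (size s) (size s')) => // [ss'|s's].
    by have := size_lt (size s); rewrite ltnn ss'.
  by have := size_lt (size s'); rewrite ltnn s's.
have s12 k : nth z0 s k = nth z0 s' k by have := code 2%N k 0%N; rewrite !IcodeE.
have -> : x = x'.
  apply: functional_extensionality => n.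
  by rewrite [x n]surjective_pairing x1 x2 -surjective_pairing.
by rewrite (@eq_from_nth _ z0 s s' sizes) // => k _; apply: s12.
Qed.

Lemma Ibelow_small g : card_lt_kappa K (Ibelow g).
Proof.
have [z1 [z01 _]] := exists_ltK2 z0 z0.
have [i [gi z1i]] := exists_ltK2 g z1.
have z0i := ltK_trans z01 z1i.
have z10 : z1 <> z0 by move=> e; move: z01; rewrite e; apply: ltK_irr.
apply: (small_of_code (code := Icode z1) (i := i)); last exact: Icode_inj.
move=> [x s] p [_ [xg sg]]; rewrite /Icode /bit.
case: (unpickle p) => [[[|[|[|[|t]]]] [n q]]|] //=; try by case: ifP.
- exact: ltK_trans (xg n) gi.
- case: (ltnP n (size s)) => ns; last by rewrite nth_default.
  by apply: ltK_trans gi; move/all_belowP: sg; apply.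
Qed.

Lemma small_in_Ibelow (X : Ielt K -> Prop) :
  (forall e, X e -> I_mem lt e) -> card_lt_kappa K X ->
  exists g, forall e, X e -> Ibelow g e.
Proof.
move=> XI Xsmall.
have [g1 xg1] := Hreg (small_image_seq (f := fun e n => (e.1 n).1) Xsmall).
have [g2 sg2] := Hreg (small_image_seq (f := fun e n => nth z0 e.2 n) Xsmall).
have [g [g1g g2g]] := exists_ltK2 g1 g2.
exists g => e Xe; split; first exact: XI.
split=> [n | ]; first by apply: ltK_trans g1g; apply: xg1; exists e, n.
by apply/all_belowP => k _; apply: ltK_trans g2g; apply: sg2; exists e, k.
Qed.

Lemma kappa_rep_interleave (As : K -> Ielt K -> Prop) :
  kappa_rep lt (I_mem lt) As ->
  exists F : K -> K, forall a,
    (forall e, Ibelow a e -> As (F a) e) /\ (forall e, As a e -> Ibelow (F a) e).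
Proof.
move=> rep; have [AsI [Asmall [mono _]]] := rep.
suff FP a : exists b,
    (forall e, Ibelow a e -> As b e) /\ (forall e, As a e -> Ibelow b e).
  exact: choice _ FP.
have [b1 Ab1] :=
  kappa_rep_cover (X := Ibelow a) rep (fun e => @proj1 _ _) (Ibelow_small (g := a)).
have [b2 Ab2] := small_in_Ibelow (AsI a) (Asmall a).
have [b [b1b b2b]] := exists_ltK2 b1 b2.
exists b; split=> e He; last exact: Ibelow_mono b2b (Ab2 e He).
by apply: (mono b1 b _ e (Ab1 e He)); left.
Qed.

Lemma closure_point_rep_sub (As : K -> Ielt K -> Prop) F d :
  kappa_rep lt (I_mem lt) As -> (forall a e, As a e -> Ibelow (F a) e) ->
  closure_point F d -> forall e, As d e -> Ibelow d e.
Proof.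
move=> [_ [_ [_ [cont _]]]] FI [dlim dF] e /(cont d dlim) [a [ad /FI]].
exact: Ibelow_mono (dF a ad).
Qed.

End Pieces.
End Cardinal.
End Kappa.

Theorem mainTheorem13 (K : Type) (lt : K -> K -> Prop)
  (Hwo : strict_well_order lt)
  (Hcard : is_cardinal lt)
  (Hunc : uncountable K)
  (Hreg : regular lt)
  (Hpow : pow_lt_kappa_eq_kappa lt)
  (Hom : pow_omega_lt_kappa lt) :
  nice lt (I_lt lt) (I_mem lt).
Proof.
move=> As rep stat.
have [z0 z0P] := exists_isZero Hwo (K_inhabited Hunc).
have [F FP] := kappa_rep_interleave Hwo Hcard Hunc Hreg Hom z0 rep.
have [d [dC [_ [a [Ia splits]]]]] := stat _ (closure_point_club Hwo Hcard Hunc Hreg F).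
have [g [gd det]] := Ibelow_determined Hwo z0P dC.1 Ia.
apply: determined_not_bs_splits (splits _ (dC.2 g gd)).
apply: (determined_over_sub _ _ det); last exact: (proj1 (FP g)).
by move=> e; apply: (closure_point_rep_sub Hwo rep _ dC) => b; apply: (proj2 (FP b)).
Qed.
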